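(* Let $(A,\vee,\perp,0)$ be a quasi-orthomodular nearsemilattice. Then for every $p \in A$ the initial segment $[0,p] = \{x \in A : x \le p\}$ is an orthomodular lattice (with the induced order), and the joins and meets in $[0,p]$ agree with the corresponding joins and meets existing in $A$.
   Context: A nearsemilattice is a poset $A$ with least element $0$ in which any two elements having a common upper bound have a join; $x \vee y$ is the (partial) join, and we say $x \vee y$ is defined iff $x,y$ have a common upper bound. An orthogonality on a poset with least element $0$ is a binary relation $\perp$ such that: (i) $x \perp y$ implies $y \perp x$; (ii) $x \le y$ and $y \perp z$ imply $x \perp z$; (iii) $x \perp 0$ for all $x$. A quasi-orthomodular nearsemilattice is a nearsemilattice with an orthogonality $\perp$ such that: (a) if $x \perp y$ then $x \vee y$ is defined; (b) if $x \le y$ then $y = x \vee z$ for some $z$ with $x \perp z$; (c) if $x \perp y$, $x \perp z$ and $y \le x \vee z$, then $y \le z$. An orthomodular lattice is a bounded lattice with an orthocomplementation $x \mapsto x^-$ (an order-reversing involution with $x \vee x^- = 1$) such that, for the orthogonality $x \perp y$ iff $y \le x^-$, whenever $x \le y$ there is $z$ with $x \perp z$ and $y = x \vee z$. *)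

Set Implicit Arguments.

Section Defs.
Variable A : Type.
Variable le : A -> A -> Prop.

Definition is_join_in (P : A -> Prop) (x y z : A) : Prop :=
  P z /\ le x z /\ le y z /\
  (forall w, P w -> le x w -> le y w -> le z w).

Definition is_meet_in (P : A -> Prop) (x y z : A) : Prop :=
  P z /\ le z x /\ le z y /\
  (forall w, P w -> le w x -> le w y -> le w z).

Definition whole (_ : A) : Prop := True.

Definition is_poset : Prop :=
  (forall x, le x x) /\
  (forall x y, le x y -> le y x -> x = y) /\
  (forall x y z, le x y -> le y z -> le x z).

Definition is_nearsemilattice (bot : A) : Prop :=
  is_poset /\ (forall x, le bot x) /\
  (forall x y, (exists u, le x u /\ le y u) -> exists z, is_join_in whole x y z).

Definition is_orthogonality (bot : A) (perp : A -> A -> Prop) : Prop :=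
  (forall x y, perp x y -> perp y x) /\
  (forall x y z, le x y -> perp y z -> perp x z) /\
  (forall x, perp x bot).

Definition is_qom_nearsemilattice (bot : A) (perp : A -> A -> Prop) : Prop :=
  is_nearsemilattice bot /\ is_orthogonality bot perp /\
  (* (a) x ⊥ y implies x ∨ y is defined, i.e. x, y have a common upper bound *)
  (forall x y, perp x y -> exists u, le x u /\ le y u) /\
  (forall x y, le x y -> exists z, perp x z /\ is_join_in whole x z y) /\
  (forall x y z w, perp x y -> perp x z -> is_join_in whole x z w ->
     le y w -> le y z).

(* The subset P with the induced order is an orthomodular lattice with least
   element b and greatest element t: a bounded lattice with an
   orthocomplementation (order-reversing involution c with x ∨ c x = t)
   such that, for x ⊥' y :<-> y <= c x, whenever x <= y there is z with
   x ⊥' z and y = x ∨ z. *)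
Definition is_orthomodular_lattice_on (P : A -> Prop) (b t : A) : Prop :=
  P b /\ P t /\ (forall x, P x -> le b x /\ le x t) /\
  (forall x y, P x -> P y -> exists z, is_join_in P x y z) /\
  (forall x y, P x -> P y -> exists z, is_meet_in P x y z) /\
  exists compl : A -> A,
    (forall x, P x -> P (compl x)) /\
    (forall x y, P x -> P y -> le x y -> le (compl y) (compl x)) /\
    (forall x, P x -> compl (compl x) = x) /\
    (forall x, P x -> is_join_in P x (compl x) t) /\
    (forall x y, P x -> P y -> le x y ->
       exists z, P z /\ le z (compl x) /\ is_join_in P x z y).
End Defs.

(* Below an element p, condition (b) with y := p yields for every x <= p a
   relative orthocomplement x' with x ⊥ x' and x ∨ x' = p, and condition (c)
   shows it is unique and that x |-> x' reverses the order; uniqueness then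
   makes it an involution.  Joins of pairs below p exist because p is a common
   upper bound, meets are obtained from joins by De Morgan, and the
   decomposition y = x ∨ z of (b) for x <= y <= p has z <= x' again by (c). *)
From Stdlib Require Import ClassicalEpsilon.

Set Implicit Arguments.
Unset Strict Implicit.

Section Poset.
Variables (A : Type) (le : A -> A -> Prop).
Hypothesis le_poset : is_poset le.

Definition downset (p : A) : A -> Prop := fun x => le x p.

Lemma le_antisym x y : le x y -> le y x -> x = y.
Proof. apply le_poset. Qed.

Lemma le_trans x y z : le x y -> le y z -> le x z.
Proof. apply le_poset. Qed.

Lemma join_in_unique P x y z z' :
  is_join_in le P x y z -> is_join_in le P x y z' -> z = z'.
Proof.
  intros [Pz [xz [yz zleast]]] [Pz' [xz' [yz' z'least]]].
  apply le_antisym; auto.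
Qed.

Lemma join_in_comm P x y z : is_join_in le P x y z -> is_join_in le P y x z.
Proof.
  intros [Pz [xz [yz zleast]]].
  repeat split; auto.
Qed.

Lemma join_in_of_whole P x y z :
  P z -> is_join_in le (@whole A) x y z -> is_join_in le P x y z.
Proof.
  intros Pz [_ [xz [yz zleast]]].
  repeat split; auto.
  intros w _; apply zleast; exact I.
Qed.

Lemma join_whole_in_downset p x y z :
  le x p -> le y p -> is_join_in le (@whole A) x y z -> is_join_in le (downset p) x y z.
Proof.
  intros xp yp Hz; apply join_in_of_whole; [|exact Hz].
  destruct Hz as [_ [_ [_ zleast]]]; apply zleast; [exact I | exact xp | exact yp].
Qed.

Lemma join_in_downset_iff p x y z :
  le x p -> le y p -> (exists j, is_join_in le (@whole A) x y j) ->
  is_join_in le (downset p) x y z <-> is_join_in le (@whole A) x y z.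
Proof.
  intros xp yp [j Hj]; split; [|exact (join_whole_in_downset xp yp)].
  intros Hz.
  replace z with j; [exact Hj|].
  apply (join_in_unique (join_whole_in_downset xp yp Hj) Hz).
Qed.

Lemma meet_in_downset_iff p x y z :
  le x p -> is_meet_in le (downset p) x y z <-> is_meet_in le (@whole A) x y z.
Proof.
  intros xp; split.
  - intros [_ [zx [zy zgreatest]]].
    repeat split; auto.
    intros w _ wx wy; apply zgreatest; auto.
    exact (le_trans wx xp).
  - intros [_ [zx [zy zgreatest]]].
    split; [exact (le_trans zx xp)|].
    repeat split; auto.
    intros w _; apply zgreatest; exact I.
Qed.

Lemma meet_in_of_antitone_involution (P : A -> Prop) (c : A -> A) x y j :
  (forall x, P x -> P (c x)) ->
  (forall x y, P x -> P y -> le x y -> le (c y) (c x)) ->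
  (forall x, P x -> c (c x) = x) ->
  P x -> P y -> is_join_in le P (c x) (c y) j -> is_meet_in le P x y (c j).
Proof.
  intros c_in c_anti c_inv Px Py [Pj [cxj [cyj jleast]]].
  split; [auto|].
  split; [|split].
  - rewrite <- (c_inv x Px); auto.
  - rewrite <- (c_inv y Py); auto.
  - intros w Pw wx wy.
    rewrite <- (c_inv w Pw).
    apply c_anti; auto.
Qed.

End Poset.

Section QuasiOrthomodular.
Variables (A : Type) (le : A -> A -> Prop) (bot : A) (perp : A -> A -> Prop).
Hypothesis qom : is_qom_nearsemilattice le bot perp.

Lemma qom_poset : is_poset le.
Proof. apply qom. Qed.

Lemma qom_bot_le x : le bot x.
Proof. apply qom. Qed.

Lemma qom_join_exists x y :
  (exists u, le x u /\ le y u) -> exists z, is_join_in le (@whole A) x y z.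
Proof. apply qom. Qed.

Lemma qom_perp_sym x y : perp x y -> perp y x.
Proof. apply qom. Qed.

Lemma qom_perp_le x y z : le x y -> perp y z -> perp x z.
Proof. apply qom. Qed.

Lemma qom_decompose x y : le x y -> exists z, perp x z /\ is_join_in le (@whole A) x z y.
Proof. apply qom. Qed.

Lemma qom_cancel x y z w :
  perp x y -> perp x z -> is_join_in le (@whole A) x z w -> le y w -> le y z.
Proof. apply qom. Qed.

Definition is_compl_below (p x z : A) : Prop :=
  perp x z /\ is_join_in le (@whole A) x z p.

Lemma compl_below_exists p x : le x p -> exists z, is_compl_below p x z.
Proof. exact (@qom_decompose x p). Qed.

Lemma compl_below_le p x z : is_compl_below p x z -> le z p.
Proof. intros [_ [_ [_ [zp _]]]]; exact zp. Qed.

Lemma compl_below_sym p x z : is_compl_below p x z -> is_compl_below p z x.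
Proof.
  intros [xz Hj]; split; [exact (qom_perp_sym xz) | exact (join_in_comm Hj)].
Qed.

Lemma compl_below_antitone p x y x' y' :
  le x y -> is_compl_below p x x' -> is_compl_below p y y' -> le y' x'.
Proof.
  intros xy [xx' Hx] Hy.
  apply (qom_cancel (qom_perp_le xy (proj1 Hy)) xx' Hx (compl_below_le Hy)).
Qed.

Lemma compl_below_unique p x z z' :
  is_compl_below p x z -> is_compl_below p x z' -> z = z'.
Proof.
  intros Hz Hz'.
  pose proof (proj1 qom_poset x) as xx.
  apply (le_antisym qom_poset);
    [exact (compl_below_antitone xx Hz' Hz) | exact (compl_below_antitone xx Hz Hz')].
Qed.

Lemma decompose_below_compl p x y x' :
  le x y -> le y p -> is_compl_below p x x' ->
  exists z, le z x' /\ is_join_in le (@whole A) x z y.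
Proof.
  intros xy yp [xx' Hx].
  destruct (qom_decompose xy) as [z [xz Hz]].
  exists z; split; [|exact Hz].
  apply (qom_cancel xz xx' Hx).
  destruct Hz as [_ [_ [zy _]]].
  exact (le_trans qom_poset zy yp).
Qed.

Definition compl_below (p x : A) : A := epsilon (inhabits bot) (is_compl_below p x).

Lemma compl_belowP p x : le x p -> is_compl_below p x (compl_below p x).
Proof. intros xp; unfold compl_below; apply epsilon_spec, compl_below_exists, xp. Qed.

Lemma compl_below_in_downset p x : le x p -> le (compl_below p x) p.
Proof. intros xp; exact (compl_below_le (compl_belowP xp)). Qed.

Lemma compl_belowK p x : le x p -> compl_below p (compl_below p x) = x.
Proof.
  intros xp.
  apply (@compl_below_unique p (compl_below p x)).
  - apply compl_belowP, compl_below_in_downset, xp.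
  - apply compl_below_sym, compl_belowP, xp.
Qed.

Lemma compl_below_le_compl p x y :
  le x p -> le y p -> le x y -> le (compl_below p y) (compl_below p x).
Proof.
  intros xp yp xy.
  exact (compl_below_antitone xy (compl_belowP xp) (compl_belowP yp)).
Qed.

Lemma join_exists_below p x y :
  le x p -> le y p -> exists z, is_join_in le (@whole A) x y z.
Proof. intros xp yp; apply qom_join_exists; exists p; auto. Qed.

Lemma downset_orthomodular p : is_orthomodular_lattice_on le (downset le p) bot p.
Proof.
  pose proof qom_poset as po.
  unfold downset.
  split; [apply qom_bot_le|].
  split; [apply (proj1 po)|].
  split; [intros x xp; split; [apply qom_bot_le | exact xp]|].
  split.
  { intros x y xp yp.
    destruct (join_exists_below xp yp) as [z Hz].
    exists z; exact (join_whole_in_downset xp yp Hz). }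
  split.
  { intros x y xp yp.
    pose proof (compl_below_in_downset xp) as x'p.
    pose proof (compl_below_in_downset yp) as y'p.
    destruct (join_exists_below x'p y'p) as [j Hj].
    exists (compl_below p j).
    apply (meet_in_of_antitone_involution (P := fun w => le w p) (c := compl_below p)).
    - exact (@compl_below_in_downset p).
    - exact (@compl_below_le_compl p).
    - exact (@compl_belowK p).
    - exact xp.
    - exact yp.
    - exact (join_whole_in_downset x'p y'p Hj). }
  exists (compl_below p).
  split; [exact (@compl_below_in_downset p)|].
  split; [exact (@compl_below_le_compl p)|].
  split; [exact (@compl_belowK p)|].
  split.
  - intros x xp.
    apply (join_whole_in_downset xp (compl_below_in_downset xp)).
    exact (proj2 (compl_belowP xp)).
  - intros x y xp yp xy.
    destruct (decompose_below_compl xy yp (compl_belowP xp)) as [z [zx' Hz]].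
    assert (zp : le z p) by (destruct Hz as [_ [_ [zy _]]]; exact (le_trans po zy yp)).
    exists z; split; [exact zp|].
    split; [exact zx'|].
    exact (join_in_of_whole yp Hz).
Qed.

End QuasiOrthomodular.

Theorem theorem2 (A : Type) (le : A -> A -> Prop) (bot : A)
    (perp : A -> A -> Prop) :
  is_qom_nearsemilattice le bot perp ->
  forall p : A,
    let I := fun x => le x p in
    is_orthomodular_lattice_on le I bot p /\
    (forall x y z, I x -> I y ->
       (is_join_in le I x y z <-> is_join_in le (@whole A) x y z)) /\
    (forall x y z, I x -> I y ->
       (is_meet_in le I x y z <-> is_meet_in le (@whole A) x y z)).
Proof.
  intros qom p I.
  pose proof (qom_poset qom) as po.
  split; [exact (downset_orthomodular qom p)|].
  split.
  - intros x y z xp yp.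
    exact (join_in_downset_iff po z xp yp (join_exists_below qom xp yp)).
  - intros x y z xp _.
    exact (meet_in_downset_iff po y z xp).
Qed.
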